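(* Let $A=(i_1,\dots,i_a)$ be an ordered tuple of distinct elements of $I_d$ and $r\ge0$ with $(a-1)l+r$ even. Let $\overrightarrow{A}=(i_a,i_1,\dots,i_{a-1})$. Then $\overrightarrow{A}^{(r)}=A^{(r)}$ in $\mathcal{G}$.
   Context: Fix a commutative ring $R$ and integers $l,d\ge1$; $I_a=\{1,\dots,a\}$. Let $\mathcal{G}$ be the $R$-superalgebra that is free as an $R$-module with basis $\{x_1^{m_1}\cdots x_d^{m_d}\,w\,c_1^{e_1}\cdots c_d^{e_d}: 0\le m_i\le l-1,\ w\in\Sigma_d,\ e_i\in\{0,1\}\}$, with multiplication determined by: the $x_i$ commute and $x_i^l=0$; $w\in\Sigma_d$ multiply as in the symmetric group (composition right to left); $c_i^2=1$, $c_ic_j=-c_jc_i$ for $i\ne j$; $wx_i=x_{w(i)}w$, $wc_i=c_{w(i)}w$; $x_ic_i=-c_ix_i$, $x_ic_j=c_jx_i$ for $i\ne j$ (this is $\operatorname{gr}$ of a level-$l$ cyclotomic Sergeev superalgebra). For an ordered tuple $A=(i_1,\dots,i_a)$ of distinct elements of $I_d$, $\sigma_A$ is the cycle $i_1\mapsto i_2\mapsto\dots\mapsto i_a\mapsto i_1$. For $\alpha\in\mathbb{Z}_2^a$: $|\alpha|=\sum_j\alpha_j$; $\mathbb{Z}_2^{a,\mathrm{ev}}$ is the set of $\alpha$ with $|\alpha|$ even; $c_\alpha(A)=c_{i_1}^{\alpha_1}\cdots c_{i_a}^{\alpha_a}$; $\epsilon^\alpha_j=\prod_{k<j}(-1)^{\alpha_k}$.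 For $r\ge0$, $\alpha\in\mathbb{Z}_2^{a,\mathrm{ev}}$: $h^\alpha_r(A)=\sum_{r_1+\dots+r_a=(a-1)(l-1)+r,\ r_j\ge0}\prod_j(\epsilon^\alpha_jx_{i_j})^{r_j}$, $A^{(r,\alpha)}=h^\alpha_r(A)\sigma_Ac_\alpha(A)$, $\tau_\alpha=(-1)^{|\alpha|/2+\sum_j j\alpha_j}$, and $A^{(r)}=\sum_{\alpha\in\mathbb{Z}_2^{a,\mathrm{ev}}}\tau_\alpha A^{(r,\alpha)}$. *)

(* Concrete construction of the graded cyclotomic Sergeev
   superalgebra  G = gr(...)  as the free R-module {ffun basisG d l -> R}
   on the basis  x^m w c^e , with multiplication defined by the relations. *)
From HB Require Import structures.
From mathcomp Require Import all_boot all_order all_algebra all_fingroup.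
Set Implicit Arguments. Unset Strict Implicit. Unset Printing Implicit Defensive.
Import GRing.Theory.
Local Open Scope ring_scope.

Section SergeevGr.
Variables (R : comPzRingType) (d l : nat).

(* Indices I_d are represented (0-based) by 'I_d.
   A basis element (m, w, e) stands for
   x_1^{m_1} ... x_d^{m_d} w c_1^{e_1} ... c_d^{e_d},  0 <= m_i <= l-1. *)
Definition basisG := ({ffun 'I_d -> 'I_l} * {perm 'I_d} * {ffun 'I_d -> bool})%type.

(* Elements of G: R-linear combinations of basis elements (coordinates).
   WARNING: the ring structure that mathcomp puts on ffuns is pointwise and is
   never used; the product of G is [mulG] below. *)
Definition G := {ffun basisG -> R^o}.
HB.instance Definition _ := GRing.Lmodule.copy G {ffun basisG -> R^o}.

Definition deltaG (b : basisG) : G := [ffun b' => (b' == b)%:R].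

Definition oneG : G :=
  [ffun b : basisG => ([forall i, b.1.1 i == 0%N :> nat] && (b.1.2 == 1%g)
                        && (b.2 == [ffun=> false]))%:R].

Definition linG (phi : basisG -> G) (f : G) : G := \sum_b f b *: phi b.

Definition incr_exp (m : {ffun 'I_d -> 'I_l}) (k : 'I_d) : option {ffun 'I_d -> 'I_l} :=
  match insub (m k).+1 : option 'I_l with
  | Some n => Some [ffun i => if i == k then n else m i]
  | None => None
  end.

(* right multiplication of a basis element by x_j:
   x^m w c^e x_j = (-1)^{e_j} x^m x_{w(j)} w c^e   (zero if the exponent reaches l) *)
Definition rx_basis (j : 'I_d) (b : basisG) : G :=
  let: (m, w, e) := b in
  match incr_exp m (w j) with
  | Some m' => (- 1) ^+ (e j) *: deltaG (m', w, e)
  | None => 0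
  end.

(* right multiplication of a basis element by c_k:
   c^e c_k = (-1)^{#{j > k | e_j}} c^{e + delta_k} *)
Definition rc_basis (k : 'I_d) (b : basisG) : G :=
  let: (m, w, e) := b in
  (- 1) ^+ #|[pred j : 'I_d | (k < j)%N && e j]|
    *: deltaG (m, w, [ffun i => if i == k then ~~ e i else e i]).

Definition rx (j : 'I_d) (f : G) : G := linG (rx_basis j) f.
Definition rc (k : 'I_d) (f : G) : G := linG (rc_basis k) f.

(* right multiplication of a basis element by a permutation s:
   x^m w c^e s = x^m (w s) c_{s^-1(k_1)} ... c_{s^-1(k_t)}, where k_1 < ... < k_t
   are the k with e_k = 1 (using c_k s = s c_{s^-1(k)}).
   Composition in Sigma_d is right to left: (w s)(i) = w (s i); in mathcomp
   this is the permutation (s * w)%g since (s * w)%g i = w (s i). *)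
Definition rw_basis (s : {perm 'I_d}) (b : basisG) : G :=
  let: (m, w, e) := b in
  foldl (fun g k => rc (s^-1 k)%g g) (deltaG (m, (s * w)%g, [ffun=> false]))
        [seq k <- enum 'I_d | e k].

Definition rw (s : {perm 'I_d}) (f : G) : G := linG (rw_basis s) f.

(* f * (x^m' w' c^e') = (((f x^m') w') c^e') *)
Definition rmul_basis (b : basisG) (f : G) : G :=
  let: (m', w', e') := b in
  let f1 := foldl (fun h j => iter (m' j) (rx j) h) f (enum 'I_d) in
  let f2 := rw w' f1 in
  foldl (fun h k => rc k h) f2 [seq k <- enum 'I_d | e' k].

Definition mulG (f g : G) : G := \sum_b g b *: rmul_basis b f.

Definition prodG (s : seq G) : G := foldr mulG oneG s.
Definition powG (f : G) (n : nat) : G := iter n (fun h => mulG h f) oneG.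

Definition xG (i : 'I_d) : G := rx i oneG.
Definition cG (i : 'I_d) : G := rc i oneG.
Definition wG (s : {perm 'I_d}) : G := rw s oneG.

Definition cyc_fun (A : seq 'I_d) (x : 'I_d) : 'I_d := if uniq A then next A x else x.

Lemma cyc_fun_inj (A : seq 'I_d) : injective (cyc_fun A).
Proof.
rewrite /cyc_fun; case: (boolP (uniq A)) => uA //.
exact: (can_inj (prev_next uA)).
Qed.

Definition sigmaA (A : seq 'I_d) : {perm 'I_d} := perm (@cyc_fun_inj A).

Section Tuple.
Variable (A : seq 'I_d).
Local Notation a := (size A).
Local Notation iA j := (tnth (in_tuple A) j).

Definition absZ2 (al : {ffun 'I_a -> bool}) : nat := (\sum_(j < a) al j)%N.

Definition epsA (al : {ffun 'I_a -> bool}) (j : 'I_a) : R :=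
  \prod_(k < a | (k < j)%N) (- 1) ^+ al k.

Definition calpha (al : {ffun 'I_a -> bool}) : G :=
  prodG [seq (if al j then cG (iA j) else oneG) | j <- enum 'I_a].

Definition hA (r : nat) (al : {ffun 'I_a -> bool}) : G :=
  let N := (a.-1 * l.-1 + r)%N in
  \sum_(t : {ffun 'I_a -> 'I_N.+1} | (\sum_(j < a) t j)%N == N)
     prodG [seq powG (epsA al j *: xG (iA j)) (t j) | j <- enum 'I_a].

Definition Aralpha (r : nat) (al : {ffun 'I_a -> bool}) : G :=
  mulG (mulG (hA r al) (wG (sigmaA A))) (calpha al).

(* tau_alpha = (-1)^{|alpha|/2 + sum_j j alpha_j}, j 1-based *)
Definition tauA (al : {ffun 'I_a -> bool}) : R :=
  (- 1) ^+ ((absZ2 al)./2 + \sum_(j < a) j.+1 * al j)%N.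

Definition Ar (r : nat) : G :=
  \sum_(al : {ffun 'I_a -> bool} | ~~ odd (absZ2 al)) tauA al *: Aralpha r al.

End Tuple.
End SergeevGr.

(* Reindex the sum defining the rotated A^(r) by the rotation
   alpha' = (alpha_a, alpha_1, ..., alpha_(a-1)) of the even vectors, and compare
   the terms; put N = (a-1)(l-1) + r.  The cycle is unchanged.  In c_alpha',
   the factor c_(i_a)^(alpha_a) has to travel past |alpha| - alpha_a
   anticommuting generators, giving (-1)^(alpha_a) since |alpha| is even.  For the
   same reason every eps^alpha'_j is (-1)^(alpha_a) times the matching eps^alpha,
   so, the x's commuting, h^alpha' = (-1)^(alpha_a N) h^alpha; finally
   tau_alpha' = (-1)^(a alpha_a) tau_alpha.  The total sign is
   (-1)^(alpha_a ((a-1) l + r)) = 1.  All products are computed on the normal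
   forms x^mu and k c^e. *)
From HB Require Import structures.
From mathcomp Require Import all_boot all_order all_algebra all_fingroup.
From mathcomp Require Import ring zify.
Set Implicit Arguments. Unset Strict Implicit. Unset Printing Implicit Defensive.
Import GRing.Theory.
Local Open Scope ring_scope.

Lemma scalable_iter (R : pzSemiRingType) (V : lSemiModType R) (F : V -> V) n :
  scalable F -> scalable (iter n F).
Proof. by move=> sF k f; elim: n => //= n ->; rewrite sF. Qed.

Lemma scalable_foldl (R : pzSemiRingType) (V : lSemiModType R) (T : Type)
    (F : V -> T -> V) (s : seq T) :
  (forall t, scalable (F^~ t)) -> scalable (fun f => foldl F f s).
Proof. by move=> sF; elim: s => //= t s IH k f; rewrite sF IH. Qed.

Section Bilinearity.
Variables (R : comPzRingType) (d l : nat).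
Local Notation G := (G R d l).
Local Notation basisG := (basisG d l).

Lemma linG_scalable (phi : basisG -> G) : scalable (linG phi).
Proof.
move=> k f; rewrite /linG scaler_sumr; apply: eq_bigr => b _.
by rewrite ffunE scalerA.
Qed.

Lemma linG_deltaG (phi : basisG -> G) (b : basisG) : linG phi (deltaG R b) = phi b.
Proof.
rewrite /linG (bigD1 b) //= big1 ?addr0; first by rewrite ffunE eqxx scale1r.
by move=> b' nb; rewrite ffunE (negbTE nb) scale0r.
Qed.

Lemma linG0 (phi : basisG -> G) : linG phi 0 = 0.
Proof. by rewrite /linG big1 // => b _; rewrite ffunE scale0r. Qed.

Lemma rmul_basis_scalable (b : basisG) : scalable (@rmul_basis R d l b).
Proof.
case: b => [[m w] e] k f /=.
rewrite scalable_foldl; last by move=> t; apply/scalable_iter/linG_scalable.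
by rewrite /rw linG_scalable scalable_foldl // => t; apply: linG_scalable.
Qed.

Lemma mulGZl k (f g : G) : mulG (k *: f) g = k *: mulG f g.
Proof.
rewrite /mulG scaler_sumr; apply: eq_bigr => b _.
by rewrite rmul_basis_scalable !scalerA mulrC.
Qed.

Lemma mulGZr k (f g : G) : mulG f (k *: g) = k *: mulG f g.
Proof.
rewrite /mulG scaler_sumr; apply: eq_bigr => b _.
by rewrite ffunE scalerA.
Qed.

Lemma mulG_deltaG (f : G) (b : basisG) : mulG f (deltaG R b) = rmul_basis b f.
Proof.
rewrite /mulG (bigD1 b) //= big1 ?addr0; first by rewrite ffunE eqxx scale1r.
by move=> b' nb; rewrite ffunE (negbTE nb) scale0r.
Qed.

Lemma mulG0r (f : G) : mulG f 0 = 0.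
Proof. by rewrite /mulG big1 // => b _; rewrite ffunE scale0r. Qed.

Lemma powGZ k (f : G) n : powG (k *: f) n = k ^+ n *: powG f n.
Proof.
elim: n => [|n IH] /=; first by rewrite expr0 scale1r.
by rewrite IH mulGZl mulGZr scalerA exprS mulrC.
Qed.

Lemma prodGZ (I : Type) (k : I -> R) (F : I -> G) (s : seq I) :
  prodG [seq k j *: F j | j <- s] = (\prod_(j <- s) k j) *: prodG [seq F j | j <- s].
Proof.
elim: s => [|j s IH] /=; first by rewrite big_nil scale1r.
by rewrite IH mulGZl mulGZr scalerA big_cons.
Qed.

End Bilinearity.

Section XMonomials.
Variables (R : comPzRingType) (d l : nat) (hl : (0 < l)%N).
Local Notation G := (G R d l).
Local Notation basisG := (basisG d l).
Local Notation expvec := {ffun 'I_d -> nat}.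

(* The monomial x^mu, which is 0 as soon as some exponent reaches l. *)
Definition xmon (mu : expvec) : G :=
  [ffun b : basisG => ((b.1.2 == 1%g) && (b.2 == [ffun=> false])
      && [forall i, (b.1.1 i : nat) == mu i])%:R].

Definition exp_fits (mu : expvec) := [forall i, (mu i < l)%N].
Definition exp_ord (mu : expvec) : {ffun 'I_d -> 'I_l} :=
  [ffun i => Ordinal (ltn_pmod (mu i) hl)].

Definition exp_add (mu nu : expvec) : expvec := [ffun i => (mu i + nu i)%N].
Definition exp_unit (j : 'I_d) : expvec := [ffun i => nat_of_bool (i == j)].

Lemma xmonE mu :
  xmon mu = if exp_fits mu then deltaG R (exp_ord mu, 1%g, [ffun=> false]) else 0.
Proof.
apply/ffunP => [[[m w] e]]; rewrite !ffunE /=.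
case: ifP => fit.
  rewrite ffunE; congr ((nat_of_bool _)%:R); rewrite !xpair_eqE.
  suff -> : [forall i, (m i : nat) == mu i] = (m == exp_ord mu).
    by case: (m == _); case: (w == 1%g); case: (e == _).
  apply/forallP/eqP => [H|-> i]; last first.
    by rewrite ffunE /= modn_small //; apply: (forallP fit).
  apply/ffunP => i; apply: val_inj; rewrite ffunE /= modn_small ?(eqP (H i)) //.
  exact: (forallP fit).
case: (boolP [forall i, _]) => H; last by rewrite andbF ffunE.
suff: exp_fits mu by rewrite fit.
by apply/forallP => i; rewrite -(eqP (forallP H i)) ltn_ord.
Qed.

Lemma xmon_overflow mu : ~~ exp_fits mu -> xmon mu = 0.
Proof. by rewrite xmonE => /negbTE ->. Qed.

Lemma exp_fits_addl mu nu : exp_fits (exp_add mu nu) -> exp_fits nu.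
Proof.
move=> /forallP fit; apply/forallP => i.
by apply: leq_ltn_trans (fit i); rewrite ffunE leq_addl.
Qed.

Lemma exp_fits_addr mu nu : exp_fits (exp_add mu nu) -> exp_fits mu.
Proof.
move=> /forallP fit; apply/forallP => i.
by apply: leq_ltn_trans (fit i); rewrite ffunE leq_addr.
Qed.

Lemma rx_xmon j mu : rx j (xmon mu) = xmon (exp_add mu (exp_unit j)).
Proof.
rewrite {1}xmonE; case: ifP => fit; last first.
  by rewrite /rx linG0 xmon_overflow //; apply: contraFN fit => /exp_fits_addr.
have fj : (mu j < l)%N := forallP fit j.
rewrite /rx linG_deltaG /= perm1 /incr_exp.
case: insubP => [n nlt nval|nlt]; last first.
  rewrite xmon_overflow //; apply: contra nlt => /forallP H.
  by have := H j; rewrite !ffunE eqxx /= modn_small ?addn1.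
have nlt' : ((mu j).+1 < l)%N by move: nlt; rewrite ffunE /= modn_small.
rewrite ffunE expr0 scale1r xmonE ifT; last first.
  apply/forallP => i; rewrite !ffunE; case: eqP => [->|_]; first by rewrite addn1.
  by rewrite addn0; exact: (forallP fit).
congr (deltaG R (_, _, _)); apply/ffunP => i; apply: val_inj.
rewrite !ffunE /=; case: eqP => [->|_] /=; last by rewrite addn0.
by rewrite nval ffunE /= !modn_small ?addn1.
Qed.

Lemma iter_rx_xmon j k mu :
  iter k (rx j) (xmon mu) = xmon [ffun i => (mu i + (i == j) * k)%N].
Proof.
elim: k => [|k IH] /=.
  by congr xmon; apply/ffunP => i; rewrite ffunE muln0 addn0.
rewrite IH rx_xmon; congr xmon; apply/ffunP => i; rewrite !ffunE.
by rewrite mulnS [((i == j) + _)%N]addnC addnA.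
Qed.

Lemma foldl_rx_xmon (nu : 'I_d -> nat) s mu :
  foldl (fun h j => iter (nu j) (rx j) h) (xmon mu) s =
  xmon [ffun i => (mu i + \sum_(j <- s) (i == j) * nu j)%N].
Proof.
elim: s mu => [|j s IH] mu /=.
  by congr xmon; apply/ffunP => i; rewrite ffunE big_nil addn0.
rewrite iter_rx_xmon IH; congr xmon; apply/ffunP => i.
by rewrite !ffunE big_cons addnA.
Qed.

Lemma filter_ffun_false (T : finType) (s : seq T) :
  [seq k <- s | [ffun=> false] k] = [::].
Proof. by rewrite (eq_filter (a2 := pred0)) ?filter_pred0 // => k; rewrite ffunE. Qed.

Lemma rw1_xmon mu : rw 1%g (xmon mu) = xmon mu.
Proof.
rewrite {1}xmonE; case: ifP => fit; last by rewrite /rw linG0 xmon_overflow // fit.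
by rewrite /rw linG_deltaG /= filter_ffun_false /= mulg1 xmonE fit.
Qed.

Lemma mulG_xmon mu nu : mulG (xmon mu) (xmon nu) = xmon (exp_add mu nu).
Proof.
rewrite [xmon nu]xmonE; case: ifP => fit; last first.
  by rewrite mulG0r xmon_overflow //; apply: contraFN fit => /exp_fits_addl.
rewrite mulG_deltaG /= filter_ffun_false /= foldl_rx_xmon rw1_xmon; congr xmon.
apply/ffunP => i; rewrite !ffunE big_enum /= (bigD1 i) //= eqxx mul1n big1 => [|j].
  by rewrite addn0 ffunE /= modn_small //; exact: (forallP fit).
by rewrite eq_sym => /negbTE ->.
Qed.

Lemma oneG_xmon : oneG R d l = xmon [ffun=> 0%N].
Proof.
apply/ffunP => b; rewrite !ffunE; congr ((nat_of_bool _)%:R).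
have -> : [forall i, (b.1.1 i : nat) == [ffun=> 0%N] i] = [forall i, (b.1.1 i : nat) == 0%N].
  by apply: eq_forallb => i; rewrite ffunE.
by case: [forall i, _]; case: (b.1.2 == 1%g); case: (b.2 == _).
Qed.

Lemma xG_xmon i : xG R l i = xmon (exp_unit i).
Proof.
rewrite /xG oneG_xmon rx_xmon; congr xmon.
by apply/ffunP => j; rewrite !ffunE.
Qed.

Definition is_xmon (f : G) := exists mu, f = xmon mu.

Lemma is_xmon_mulG f g : is_xmon f -> is_xmon g -> is_xmon (mulG f g).
Proof. by move=> [mu ->] [nu ->]; exists (exp_add mu nu); rewrite mulG_xmon. Qed.

Lemma is_xmon_oneG : is_xmon (oneG R d l).
Proof. by exists [ffun=> 0%N]; rewrite oneG_xmon. Qed.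

Lemma is_xmon_powG_xG i n : is_xmon (powG (xG R l i) n).
Proof.
elim: n => [|n IH] /=; first exact: is_xmon_oneG.
by apply: is_xmon_mulG IH _; rewrite xG_xmon; eexists.
Qed.

Lemma mulG_xmonC f g : is_xmon f -> is_xmon g -> mulG f g = mulG g f.
Proof.
move=> [mu ->] [nu ->]; rewrite !mulG_xmon; congr xmon.
by apply/ffunP => i; rewrite !ffunE addnC.
Qed.

Lemma mulG_xmonA f g h : is_xmon f -> is_xmon g -> is_xmon h ->
  mulG f (mulG g h) = mulG (mulG f g) h.
Proof.
move=> [mu ->] [nu ->] [ka ->]; rewrite !mulG_xmon; congr xmon.
by apply/ffunP => i; rewrite !ffunE addnA.
Qed.

End XMonomials.

Section CliffordMonomials.
Variables (R : comPzRingType) (d l : nat) (hl : (0 < l)%N).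
Local Notation G := (G R d l).
Local Notation subvec := {ffun 'I_d -> bool}.

Definition cmon (e : subvec) : G := deltaG R ([ffun=> Ordinal hl], 1%g, e).

Definition xorC (e1 e2 : subvec) : subvec := [ffun i => e1 i (+) e2 i].
Definition unitC (k : 'I_d) : subvec := [ffun i => i == k].

Lemma xorCC : commutative xorC.
Proof. by move=> e1 e2; apply/ffunP => i; rewrite !ffunE addbC. Qed.

Lemma xorCA : associative xorC.
Proof. by move=> e1 e2 e3; apply/ffunP => i; rewrite !ffunE addbA. Qed.

Lemma xor0C : left_id [ffun=> false] xorC.
Proof. by move=> e; apply/ffunP => i; rewrite !ffunE. Qed.

Lemma xorC0 : right_id [ffun=> false] xorC.
Proof. by move=> e; rewrite xorCC xor0C. Qed.

Lemma oneG_cmon : oneG R d l = cmon [ffun=> false].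
Proof.
apply/ffunP => [[[m w] e]]; rewrite !ffunE /=; congr ((nat_of_bool _)%:R).
rewrite !xpair_eqE.
suff -> : [forall i, (m i : nat) == 0%N] = (m == [ffun=> Ordinal hl]) by [].
apply/forallP/eqP => [H|-> i]; last by rewrite ffunE.
by apply/ffunP => i; apply: val_inj; rewrite ffunE /= (eqP (H i)).
Qed.

Definition nabove (e : subvec) (k : 'I_d) := #|[pred j : 'I_d | (k < j)%N && e j]|.

Lemma rc_cmon k e : rc k (cmon e) = (- 1) ^+ nabove e k *: cmon (xorC e (unitC k)).
Proof.
rewrite /rc /cmon linG_deltaG /=; congr (_ *: deltaG R (_, _, _)).
apply/ffunP => i; rewrite !ffunE; case: eqP => [->|_]; last by rewrite addbF.
by rewrite addbT.
Qed.

Lemma foldl_rc_cmon ks e :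
  sorted (fun a b : 'I_d => (a < b)%N) ks ->
  foldl (fun g k => rc k g) (cmon e) ks =
  (- 1) ^+ (\sum_(k <- ks) nabove e k)%N *: cmon [ffun i => e i (+) (i \in ks)].
Proof.
elim: ks e => [|k ks IH] e /=.
  move=> _; rewrite big_nil expr0 scale1r; congr cmon.
  by apply/ffunP => i; rewrite ffunE in_nil addbF.
move=> pth.
have allk : all (fun b : 'I_d => (k < b)%N) ks.
  by apply: order_path_min pth => x y z; apply: ltn_trans.
rewrite rc_cmon scalable_foldl; last by move=> t; apply: linG_scalable.
rewrite IH ?(path_sorted pth) // scalerA -exprD; congr (_ ^+ _ *: cmon _).
  rewrite big_cons; congr (_ + _)%N; apply: eq_big_seq => k' k'in.
  have kk' : (k < k')%N by exact: (allP allk).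
  rewrite /nabove; apply: eq_card => j /=; rewrite !inE !ffunE.
  case: (ltnP k' j) => //= kj; case: eqP => [ej|]; last by rewrite addbF.
  by move: kj; rewrite ej => /(ltn_trans kk'); rewrite ltnn.
apply/ffunP => i; rewrite !ffunE in_cons -addbA; congr (_ (+) _).
case: eqP => [->|_] //=.
suff -> : (k \in ks) = false by [].
by apply/negP => kin; have := allP allk k kin; rewrite ltnn.
Qed.

Lemma sorted_filter_enum_ord (p : pred 'I_d) :
  sorted (fun a b : 'I_d => (a < b)%N) [seq k <- enum 'I_d | p k].
Proof.
apply: sorted_filter; first by move=> x y z; apply: ltn_trans.
by have := iota_ltn_sorted 0 d; rewrite -val_enum_ord sorted_map.
Qed.

Lemma foldl_rc_cmon_enum (e e' : subvec) :
  foldl (fun g k => rc k g) (cmon e) [seq k <- enum 'I_d | e' k] =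
  (- 1) ^+ (\sum_(k | e' k) nabove e k)%N *: cmon (xorC e e').
Proof.
rewrite foldl_rc_cmon ?sorted_filter_enum_ord // big_filter big_enum_cond.
by congr (_ *: cmon _); apply/ffunP => i; rewrite !ffunE mem_filter mem_enum andbT.
Qed.

Lemma rw1_cmon e : rw 1%g (cmon e) = cmon e.
Proof.
rewrite /rw /cmon linG_deltaG /= mulg1 -/(cmon _).
have -> : foldl (fun g k => rc ((1 : {perm 'I_d})^-1 k)%g g) (cmon [ffun=> false])
              [seq k <- enum 'I_d | e k] =
          foldl (fun g k => rc k g) (cmon [ffun=> false]) [seq k <- enum 'I_d | e k].
  by elim: (filter _ _) (cmon _) => //= k ks IH g; rewrite IH invg1 perm1.
rewrite foldl_rc_cmon_enum xor0C big1 ?expr0 ?scale1r // => k _.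
by apply: eq_card0 => j; rewrite !inE ffunE andbF.
Qed.

Definition cmon_sign (e1 e2 : subvec) : R :=
  \prod_(k : 'I_d) \prod_(j : 'I_d) (- 1) ^+ [&& e2 k, e1 j & (k < j)%N].

Lemma mulG_cmon e1 e2 : mulG (cmon e1) (cmon e2) = cmon_sign e1 e2 *: cmon (xorC e1 e2).
Proof.
rewrite {2}/cmon mulG_deltaG /=.
have -> : foldl (fun h j => iter ([ffun=> Ordinal hl] j) (rx j) h) (cmon e1) (enum 'I_d)
          = cmon e1.
  by elim: (enum _) (cmon e1) => //= j s IH f; rewrite IH ffunE.
rewrite rw1_cmon foldl_rc_cmon_enum; congr (_ *: _).
rewrite -prodrXr big_mkcond /=; apply: eq_bigr => k _; case: (e2 k) => /=; last first.
  by rewrite big1 // => j _; rewrite expr0.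
rewrite /nabove -sum1_card -prodrXr big_mkcond /=; apply: eq_bigr => j _.
by rewrite !inE andbC; case: (_ && _).
Qed.

Lemma cmon_signDl e1 e2 e3 :
  cmon_sign (xorC e1 e2) e3 = cmon_sign e1 e3 * cmon_sign e2 e3.
Proof.
rewrite /cmon_sign -big_split; apply: eq_bigr => k _.
rewrite -big_split; apply: eq_bigr => j _; rewrite ffunE.
by case: (e1 j); case: (e2 j); case: (e3 k); case: (k < j)%N;
  rewrite /= ?expr0 ?expr1 ?mulr1 ?mul1r ?mulrNN ?mulr1.
Qed.

Lemma cmon_signDr e1 e2 e3 :
  cmon_sign e1 (xorC e2 e3) = cmon_sign e1 e2 * cmon_sign e1 e3.
Proof.
rewrite /cmon_sign -big_split; apply: eq_bigr => k _.
rewrite -big_split; apply: eq_bigr => j _; rewrite ffunE.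
by case: (e1 j); case: (e2 k); case: (e3 k); case: (k < j)%N;
  rewrite /= ?expr0 ?expr1 ?mulr1 ?mul1r ?mulrNN ?mulr1.
Qed.

Lemma cmon_sign0r e : cmon_sign e [ffun=> false] = 1.
Proof. by rewrite /cmon_sign big1 // => k _; rewrite big1 // => j _; rewrite ffunE. Qed.

Lemma cmon_sign0l e : cmon_sign [ffun=> false] e = 1.
Proof.
by rewrite /cmon_sign big1 // => k _; rewrite big1 // => j _; rewrite ffunE andbF.
Qed.

Lemma cmon_sign_unit a b : cmon_sign (unitC a) (unitC b) = (- 1) ^+ (b < a)%N.
Proof.
rewrite /cmon_sign (bigD1 b) //= [X in _ * X]big1 ?mulr1; last first.
  by move=> k kb; rewrite big1 // => j _; rewrite ffunE (negbTE kb) /= expr0.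
rewrite (bigD1 a) //= [X in _ * X]big1 ?mulr1; last first.
  by move=> j ja; rewrite !ffunE (negbTE ja) eqxx /= expr0.
by rewrite !ffunE !eqxx.
Qed.

Definition is_cterm (f : G) := exists k e, f = k *: cmon e.

Lemma mulG_cterm k1 k2 e1 e2 :
  mulG (k1 *: cmon e1) (k2 *: cmon e2) = (k1 * k2 * cmon_sign e1 e2) *: cmon (xorC e1 e2).
Proof. by rewrite mulGZl mulGZr mulG_cmon !scalerA. Qed.

Lemma is_cterm_mulG f g : is_cterm f -> is_cterm g -> is_cterm (mulG f g).
Proof.
by move=> [k1 [e1 ->]] [k2 [e2 ->]]; rewrite mulG_cterm; do 2 eexists.
Qed.

Lemma mulG_ctermA f g h : is_cterm f -> is_cterm g -> is_cterm h ->
  mulG f (mulG g h) = mulG (mulG f g) h.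
Proof.
move=> [k1 [e1 ->]] [k2 [e2 ->]] [k3 [e3 ->]]; rewrite !mulG_cterm xorCA.
by congr (_ *: _); rewrite cmon_signDl cmon_signDr; ring.
Qed.

Lemma cG_cmon i : cG R l i = cmon (unitC i).
Proof.
rewrite /cG oneG_cmon rc_cmon xor0C.
suff -> : nabove [ffun=> false] i = 0%N by rewrite expr0 scale1r.
by apply: eq_card0 => j; rewrite !inE ffunE andbF.
Qed.

Lemma is_cterm_oneG : is_cterm (oneG R d l).
Proof. by exists 1, [ffun=> false]; rewrite oneG_cmon scale1r. Qed.

Lemma is_cterm_cG i : is_cterm (cG R l i).
Proof. by exists 1, (unitC i); rewrite cG_cmon scale1r. Qed.

Lemma mul1G_cterm f : is_cterm f -> mulG (oneG R d l) f = f.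
Proof.
move=> [k [e ->]]; rewrite oneG_cmon -[cmon _]scale1r mulG_cterm cmon_sign0l xor0C.
by rewrite !mulr1 mul1r.
Qed.

Lemma mulG1_cterm f : is_cterm f -> mulG f (oneG R d l) = f.
Proof.
move=> [k [e ->]]; rewrite oneG_cmon -[cmon [ffun=> false]]scale1r mulG_cterm.
by rewrite cmon_sign0r xorC0 !mulr1.
Qed.

Lemma mulG_cG_anti (a b : 'I_d) : a != b ->
  mulG (cG R l a) (cG R l b) = - 1 *: mulG (cG R l b) (cG R l a).
Proof.
move=> ab; rewrite !cG_cmon !mulG_cmon !cmon_sign_unit xorCC scalerA.
congr (_ *: _); case: (ltngtP a b) => [lab|lab|eab].
- by rewrite expr1 mulrN1 opprK.
- by rewrite expr1 mulr1.
- by move: ab; rewrite (val_inj eab) eqxx.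
Qed.

End CliffordMonomials.

Section ProdRotation.
Variables (R : comPzRingType) (d l : nat).
Local Notation G := (G R d l).
Variables (S : G -> Prop) (I : eqType) (F : I -> G) (k : I -> R) (y : G).
Hypotheses (S_mulG : forall f g, S f -> S g -> S (mulG f g))
  (S_mulGA : forall f g h, S f -> S g -> S h -> mulG f (mulG g h) = mulG (mulG f g) h)
  (S_oneG : S (oneG R d l)) (S_y : S y) (S_F : forall j, S (F j)).

Lemma prodG_closed (js : seq I) : S (prodG (map F js)).
Proof. by elim: js => //= j js IH; apply: S_mulG. Qed.

Lemma prodG_cons_rcons (js : seq I) :
  (forall j, j \in js -> mulG y (F j) = k j *: mulG (F j) y) ->
  prodG (y :: map F js) = (\prod_(j <- js) k j) *: prodG (rcons (map F js) y).
Proof.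
elim: js => [|j js IH] yF /=; first by rewrite big_nil scale1r.
have S_js := prodG_closed js.
rewrite S_mulGA // yF ?mem_head // mulGZl -S_mulGA //.
rewrite -[mulG y _]/(prodG (y :: map F js)) IH => [|j' j'js]; last first.
  by apply: yF; rewrite inE j'js orbT.
by rewrite mulGZr scalerA big_cons.
Qed.

End ProdRotation.

Lemma filter_iota_last m : [seq x <- iota 0 m.+1 | x != m] = iota 0 m.
Proof.
rewrite -addn1 iotaD filter_cat /= add0n eqxx cats0.
apply/all_filterP/allP => x; rewrite mem_iota add0n => /andP [_ xm].
by rewrite neq_ltn xm.
Qed.

Lemma map_rot_iota m : [seq ((x + m) %% m.+1)%N | x <- iota 0 m.+1] = m :: iota 0 m.
Proof.
rewrite /= add0n modn_small // -[1%N]addn0 iotaDl -map_comp.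
congr (_ :: _); rewrite -[RHS]map_id; apply/eq_in_map => x.
rewrite mem_iota add0n => /andP [_ xm] /=.
by rewrite addnC addnA addn1 modnDl modn_small // ltnS ltnW.
Qed.

Lemma nth_rotr1 (T : Type) (x0 : T) (s : seq T) i : (i < size s)%N ->
  nth x0 (rotr 1 s) i = nth x0 s ((i + (size s).-1) %% size s).
Proof.
case/lastP: s => // t z; rewrite rotr1_rcons size_rcons /= => ilt.
rewrite nth_rcons; case: i ilt => [|i] ilt /=.
  by rewrite add0n modn_small // ltnn eqxx.
rewrite addSn -addnS modnDr.
by rewrite ltnS in ilt; rewrite modn_small ?ilt // ltnW.
Qed.

Section Rotation.
Variables (R : comPzRingType) (d l : nat) (hl : (0 < l)%N) (A : seq 'I_d) (r : nat).
Hypotheses (uA : uniq A) (A_gt0 : (0 < size A)%N).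
Local Notation A' := (rotr 1 A).
Local Notation a := (size A).
Local Notation n := (size A).-1.
Local Notation iA j := (tnth (in_tuple A) j).

Lemma size_A' : size A' = a. Proof. exact: size_rotr. Qed.
Lemma A'_gt0 : (0 < size A')%N. Proof. by rewrite size_A'. Qed.
Lemma a_eq : a = n.+1. Proof. by rewrite prednK. Qed.
Lemma n_lt : (n < a)%N. Proof. by rewrite ltn_predL. Qed.

Definition rot_ord (j : 'I_(size A')) : 'I_a := Ordinal (ltn_pmod (j + n) A_gt0).
Definition rot_ordV (j : 'I_a) : 'I_(size A') := Ordinal (ltn_pmod (j + 1) A'_gt0).
Definition ilast : 'I_a := Ordinal n_lt.
Definition iinit := [seq j <- enum 'I_a | j != ilast].

Lemma rot_ordK : cancel rot_ord rot_ordV.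
Proof.
move=> j; apply: val_inj => /=; move: (j : nat) (ltn_ord j) => i; rewrite size_A' => ilt.
by rewrite modnDml -addnA addn1 -a_eq modnDr modn_small.
Qed.

Lemma rot_ordVK : cancel rot_ordV rot_ord.
Proof.
move=> j; apply: val_inj => /=; rewrite size_A'.
by rewrite modnDml -addnA add1n -a_eq modnDr modn_small.
Qed.

Lemma rot_ord_bij : bijective rot_ord.
Proof. exact: Bijective rot_ordK rot_ordVK. Qed.

Lemma rot_ordV_bij : bijective rot_ordV.
Proof. exact: Bijective rot_ordVK rot_ordK. Qed.

Lemma val_rot_ordV (j : 'I_a) : (rot_ordV j : nat) = if j == ilast then 0%N else j.+1.
Proof.
rewrite /= size_A'; case: eqP => [->|njn] /=; first by rewrite addn1 -a_eq modnn.
have jn : (j : nat) != n by apply/eqP => e; apply: njn; apply: val_inj.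
rewrite modn_small ?addn1 //; move: (ltn_ord j) jn A_gt0; move: (j : nat) => i; lia.
Qed.

Lemma val_rot_ord (j : 'I_(size A')) :
  (rot_ord j : nat) = if (j : nat) == 0%N then n else (j : nat).-1.
Proof.
rewrite /=; move: (j : nat) (ltn_ord j) => i; rewrite size_A'; case: i => [|i] ilt /=.
  by rewrite add0n modn_small // ltn_predL.
by rewrite addSn -addnS -a_eq modnDr modn_small // ltnW.
Qed.

Lemma map_val_iinit : map val iinit = iota 0 n.
Proof.
rewrite /iinit (eq_filter (a2 := preim val (fun x => x != n))) //.
by rewrite -filter_map val_enum_ord -(filter_iota_last n) -a_eq.
Qed.

Lemma enum_rcons_ilast : enum 'I_a = rcons iinit ilast.
Proof.
apply: (inj_map val_inj); rewrite map_rcons val_enum_ord map_val_iinit /=.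
by rewrite {1}a_eq -addn1 iotaD cats1.
Qed.

Lemma map_rot_ord_enum : map rot_ord (enum 'I_(size A')) = ilast :: iinit.
Proof.
apply: (inj_map val_inj); rewrite /= map_val_iinit -map_comp.
rewrite (eq_map (g := (fun x => (x + n) %% a)%N \o val)) // map_comp val_enum_ord.
by rewrite size_A' -map_rot_iota -a_eq.
Qed.

Lemma tnth_rotr1 (j : 'I_(size A')) : tnth (in_tuple A') j = iA (rot_ord j).
Proof.
have x0 : 'I_d := iA ilast.
by rewrite !(tnth_nth x0) nth_rotr1 // -size_A'.
Qed.

Lemma iA_inj : injective (fun j => iA j).
Proof. by apply/tuple_uniqP. Qed.

Definition rot_alpha (al : {ffun 'I_a -> bool}) : {ffun 'I_(size A') -> bool} :=
  [ffun j => al (rot_ord j)].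

Lemma rot_alpha_bij : bijective rot_alpha.
Proof.
exists (fun al : {ffun 'I_(size A') -> bool} => [ffun j => al (rot_ordV j)]) => al; apply/ffunP => j; rewrite !ffunE.
  by rewrite rot_ordVK.
by rewrite rot_ordK.
Qed.

Lemma absZ2_rot al : absZ2 (rot_alpha al) = absZ2 al.
Proof.
rewrite /absZ2 [RHS](reindex rot_ord); last exact: onW_bij rot_ord_bij.
by apply: eq_bigr => j _; rewrite ffunE.
Qed.

Lemma absZ2_ilast (al : {ffun 'I_a -> bool}) :
  absZ2 al = (al ilast + \sum_(j | j != ilast) al j)%N.
Proof. exact: bigD1. Qed.

Lemma epsA_rot al : ~~ odd (absZ2 al) -> forall j,
  epsA R (rot_alpha al) j = (- 1) ^+ al ilast * epsA R al (rot_ord j).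
Proof.
move=> ev j; rewrite /epsA !prodrXr -exprD -[LHS]signr_odd -[RHS]signr_odd.
congr (_ ^+ (nat_of_bool _)).
rewrite (reindex rot_ordV); last exact: onW_bij rot_ordV_bij.
under eq_bigr do rewrite ffunE rot_ordVK.
have [j0|j_gt0] := eqVneq (j : nat) 0%N.
  rewrite big_pred0 => [|k]; last by rewrite j0 ltn0.
  rewrite (eq_bigl (fun k => k != ilast)) => [|k]; last first.
    rewrite val_rot_ord j0 /= -val_eqE /=.
    by move: (ltn_ord k) A_gt0; move: (k : nat) => i; lia.
  by rewrite -absZ2_ilast (negbTE ev).
rewrite (bigD1 ilast); last by rewrite val_rot_ordV eqxx lt0n.
congr (odd (_ + _)); apply: eq_bigl => k.
rewrite val_rot_ordV val_rot_ord (negbTE j_gt0); case: eqP => [->|nk] /=.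
  by rewrite andbF; move: (ltn_ord j) A_gt0; move: (j : nat) => i; rewrite size_A'; lia.
have : (k : nat) != n by apply/eqP => e; apply: nk; apply: val_inj.
by rewrite andbT; move: (ltn_ord j) (ltn_ord k) A_gt0;
  move: (j : nat) (k : nat) => i i'; rewrite size_A'; lia.
Qed.

Lemma tauA_rot al : ~~ odd (absZ2 al) ->
  tauA R (rot_alpha al) = (- 1) ^+ (al ilast * a) * tauA R al.
Proof.
move=> ev; rewrite /tauA absZ2_rot -!exprD -[LHS]signr_odd -[RHS]signr_odd.
congr (_ ^+ (nat_of_bool _)).
rewrite (reindex rot_ordV); last exact: onW_bij rot_ordV_bij.
rewrite [in RHS](bigD1 ilast) // (bigD1 ilast) // val_rot_ordV eqxx ffunE rot_ordVK.
have -> : (\sum_(j | j != ilast) (rot_ordV j).+1 * rot_alpha al (rot_ordV j) =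
           \sum_(j | j != ilast) j.+1 * al j + \sum_(j | j != ilast) al j)%N.
  rewrite -big_split; apply: eq_bigr => j njn.
  by rewrite val_rot_ordV (negbTE njn) ffunE rot_ordVK mulSn addnC.
move: ev; rewrite absZ2_ilast; case: (al ilast) => /=; lia.
Qed.

Local Notation N := (n * l.-1 + r)%N.

Lemma N_eq : N.+1 = ((size A').-1 * l.-1 + r).+1.
Proof. by rewrite size_A'. Qed.

Definition rot_exp (t : {ffun 'I_a -> 'I_N.+1}) :
    {ffun 'I_(size A') -> 'I_((size A').-1 * l.-1 + r).+1} :=
  [ffun j => cast_ord N_eq (t (rot_ord j))].

Lemma rot_exp_bij : bijective rot_exp.
Proof.
exists (fun t : {ffun 'I_(size A') -> _} =>
          [ffun j => cast_ord (esym N_eq) (t (rot_ordV j))]) => t;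
  apply/ffunP => j; rewrite !ffunE.
  by rewrite rot_ordVK cast_ordK.
by rewrite rot_ordK cast_ordKV.
Qed.

Lemma sum_rot_exp t : (\sum_(j < size A') rot_exp t j)%N = (\sum_(j < a) t j)%N.
Proof.
rewrite [RHS](reindex rot_ord); last exact: onW_bij rot_ord_bij.
by apply: eq_bigr => j _; rewrite ffunE.
Qed.

Lemma prodG_xpow_rot (m : 'I_a -> nat) :
  prodG [seq powG (xG R l (iA j)) (m j) | j <- ilast :: iinit] =
  prodG [seq powG (xG R l (iA j)) (m j) | j <- enum 'I_a].
Proof.
rewrite (prodG_cons_rcons (S := @is_xmon R d l) (k := fun _ => 1)).
- by rewrite big1_seq ?scale1r // -map_rcons -enum_rcons_ilast.
- exact: is_xmon_mulG.
- exact: mulG_xmonA.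
- exact: is_xmon_oneG.
- exact: is_xmon_powG_xG.
- by move=> j; apply: is_xmon_powG_xG.
- by move=> j _; rewrite scale1r; apply: (mulG_xmonC hl); apply: is_xmon_powG_xG.
Qed.

Lemma hA_rot al : ~~ odd (absZ2 al) ->
  hA R l r (rot_alpha al) = (- 1) ^+ (al ilast * N) *: hA R l r al.
Proof.
move=> ev; rewrite /hA (reindex rot_exp); last exact: onW_bij rot_exp_bij.
rewrite scaler_sumr; apply: eq_big => t; first by rewrite sum_rot_exp size_A'.
move=> /eqP tN; rewrite sum_rot_exp size_A' in tN.
rewrite (eq_map (g := fun j => (epsA R (rot_alpha al) j ^+ rot_exp t j) *:
                               powG (xG R l (tnth (in_tuple A') j)) (rot_exp t j)));
  last by move=> j; rewrite powGZ.
rewrite [in RHS](eq_map (g := fun j => (epsA R al j ^+ t j) *: powG (xG R l (iA j)) (t j)));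
  last by move=> j; rewrite powGZ.
rewrite !prodGZ scalerA; congr (_ *: _).
  rewrite !big_map [in RHS](reindex rot_ord) /=; last exact: onW_bij rot_ord_bij.
  under eq_bigr do rewrite epsA_rot // ffunE exprMn -exprM.
  rewrite big_split /= prodrXr -big_distrr /=; congr (_ ^+ (_ * _) * _).
  by rewrite -[RHS]tN [RHS](reindex rot_ord) //; exact: onW_bij rot_ord_bij.
rewrite (eq_map (g := (fun j => powG (xG R l (iA j)) (t j)) \o rot_ord)) => [|j];
  last by rewrite /= ffunE tnth_rotr1.
by rewrite map_comp map_rot_ord_enum prodG_xpow_rot.
Qed.

Lemma calpha_rot al : ~~ odd (absZ2 al) ->
  calpha R l (rot_alpha al) = (- 1) ^+ al ilast *: calpha R l al.
Proof.
move=> ev; rewrite /calpha.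
pose Fc j := if al j then cG R l (iA j) else oneG R d l.
have is_cterm_Fc j : is_cterm hl (Fc j).
  by rewrite /Fc; case: (al j); [exact: is_cterm_cG | exact: is_cterm_oneG].
rewrite (eq_map (g := Fc \o rot_ord)) => [|j]; last by rewrite /= ffunE tnth_rotr1.
rewrite map_comp map_rot_ord_enum [map Fc _]/=.
rewrite (prodG_cons_rcons (S := is_cterm hl) (k := fun j => if al ilast && al j then - 1 else 1)).
- rewrite -map_rcons -enum_rcons_ilast; congr (_ *: _).
  case al_last: (al ilast) => /=; last by rewrite big1_seq ?expr0.
  rewrite (eq_bigr (fun j => (- 1) ^+ al j)) => [|j _]; last by case: (al j).
  rewrite prodrXr big_filter big_enum_cond /= -signr_odd.
  by move: ev; rewrite absZ2_ilast al_last /=; case: odd.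
- exact: is_cterm_mulG.
- exact: mulG_ctermA.
- exact: is_cterm_oneG.
- exact: is_cterm_Fc.
- exact: is_cterm_Fc.
move=> j; rewrite mem_filter => /andP [njn _].
rewrite /Fc; case: (al ilast); case: (al j) => /=; rewrite ?scale1r //.
- by apply/(mulG_cG_anti R hl)/eqP => /iA_inj ej; rewrite ej eqxx in njn.
- by rewrite mulG1_cterm ?mul1G_cterm //; apply: is_cterm_cG.
- by rewrite mulG1_cterm ?mul1G_cterm //; apply: is_cterm_cG.
Qed.

Lemma sigmaA_rotr1 : sigmaA A' = sigmaA A.
Proof. by apply/permP => x; rewrite !permE /cyc_fun rotr_uniq uA next_rotr. Qed.

Lemma Ar_rotr1 : ~~ odd (n * l + r) -> Ar R l A' r = Ar R l A r.
Proof.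
move=> ev_nlr; rewrite /Ar (reindex rot_alpha); last exact: onW_bij rot_alpha_bij.
(* The big-operator instance and the arguments of the rewrite rules below are
   given explicitly: left to inference, unification does not terminate. *)
apply: (@eq_big (G R d l) 0 +%R) => [al|al]; first by rewrite absZ2_rot.
rewrite absZ2_rot => ev; rewrite /Aralpha sigmaA_rotr1.
rewrite (hA_rot ev) (calpha_rot ev) (tauA_rot ev) mulGZr !mulGZl !scalerA.
congr (_ *: _); rewrite mulrAC -[RHS]mul1r; congr (_ * _).
have ev_sign : ~~ odd (al ilast * a + (al ilast + al ilast * N)).
  by move: ev_nlr; rewrite -(prednK hl) mulnS; case: (al ilast) => /=; lia.
by rewrite -!exprD -signr_odd (negbTE ev_sign).
Qed.

End Rotation.

Theorem mainTheorem4 (R : comPzRingType) (l d : nat) (hl : (1 <= l)%N) (hd : (1 <= d)%N)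
  (A : seq 'I_d) (r : nat) :
  uniq A -> (0 < size A)%N -> ~~ odd ((size A).-1 * l + r) ->
  Ar R l (rotr 1 A) r = Ar R l A r.
Proof. by move=> uA A_gt0; apply: Ar_rotr1. Qed.
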